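(* Let $\Sigma\subset\mathbb{CH}^{n+1}$ be an $m$-dimensional submanifold that is $C^1$-asymptotically regular. If $m\ge2$ and $\Sigma$ is isotropic (i.e. the Kähler form $\omega_{\mathbb{CH}}(X,Y)=g_{\mathbb{CH}}(X,J_{\mathbb{CH}}Y)$ vanishes on $T\Sigma$), then $\Sigma$ is asymptotically horizontal.
   Context: Identify $\mathbb R^{2n+2}$ with $\mathbb C^{n+1}$ via $z_j=x_j+iy_j$; $r=|z|$; $\theta=r^{-2}\sum_j(x_jdy_j-y_jdx_j)$ on $\mathbb R^{2n+2}\setminus\{0\}$; $\mathbb B^{2n+2}$ the open unit ball, $\mathbb S^{2n+1}$ its boundary, $\hat\theta$ the pullback of $\theta$ to $\mathbb S^{2n+1}$; a submanifold $\Gamma\subset\mathbb S^{2n+1}$ is horizontal if $T_q\Gamma\subset\ker\hat\theta_q$ for all $q\in\Gamma$. $\mathbb{CH}^{n+1}$ is complex hyperbolic space (complete simply connected Kähler manifold of real dimension $2n+2$ with constant holomorphic sectional curvature, sectional curvatures in $[-4,-1]$), metric $g_{\mathbb{CH}}$, complex structure $J_{\mathbb{CH}}$. Bergman model: $\mathbb B^{2n+2}$ with $g_B=\frac{1}{1-r^2}\sum_jdz_jd\bar z_j+\frac{1}{(1-r^2)^2}\sum_{j,k}z_j\bar z_kdz_kd\bar z_j$ and the standard complex structure. For $p\in\mathbb{CH}^{n+1}$, $\Upsilon_p:\mathbb{CH}^{n+1}\to(\mathbb B^{2n+2},g_B)$ is an isometric biholomorphism with $\Upsilon_p(p)=0$,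 and $\Sigma_p=\overline{\Upsilon_p(\Sigma)}\subset\bar{\mathbb B}^{2n+2}$. $\Sigma$ is $C^l$-asymptotically regular if $\Sigma_p$ is a $C^l$ submanifold with boundary meeting $\partial\mathbb B^{2n+2}$ transversally; it is asymptotically horizontal if moreover $\partial\Sigma_p$ is a horizontal submanifold of $\mathbb S^{2n+1}$ (independent of choices). *)

(* R : realType, ambient space R^{2n+2} = 'rV[R]_(n.+1 + n.+1),
   first block = (x_0..x_n), second block = (y_0..y_n), z_j = x_j + i y_j. *)
From HB Require Import structures.
From mathcomp Require Import all_boot all_order all_algebra.
From mathcomp Require Import all_classical all_reals all_analysis.
Set Implicit Arguments. Unset Strict Implicit. Unset Printing Implicit Defensive.
Import Order.TTheory GRing.Theory Num.Theory.
Import numFieldNormedType.Exports.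
Local Open Scope classical_set_scope.
Local Open Scope ring_scope.

Section Defs.
Variables (R : realType) (n : nat).

Definition E := 'rV[R]_(n.+1 + n.+1).

Definition xc (v : E) : 'rV[R]_n.+1 := lsubmx v.
Definition yc (v : E) : 'rV[R]_n.+1 := rsubmx v.

(* standard complex structure: multiplication by i, (x,y) |-> (-y,x) *)
Definition Jst (v : E) : E := row_mx (- yc v) (xc v).

(* real and imaginary parts of the Hermitian product <a,b> = sum_j a_j conj(b_j) *)
Definition ReH (a b : E) : R :=
  \sum_(j < n.+1) (xc a ord0 j * xc b ord0 j + yc a ord0 j * yc b ord0 j).
Definition ImH (a b : E) : R :=
  \sum_(j < n.+1) (yc a ord0 j * xc b ord0 j - xc a ord0 j * yc b ord0 j).

Definition r2 (z : E) : R := ReH z z.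

Definition open_unit_ball : set E := [set z | r2 z < 1].
Definition unit_sphere : set E := [set z | r2 z = 1].

(* Bergman metric g_B at z : real part of
   (1/(1-r^2)) <X,Y> + (1/(1-r^2)^2) <X,z><z,Y> *)
Definition gB (z X Y : E) : R :=
  ReH X Y / (1 - r2 z)
  + (ReH X z * ReH z Y - ImH X z * ImH z Y) / (1 - r2 z) ^+ 2.

Definition kahler (z X Y : E) : R := gB z X (Jst Y).

(* contact form theta at q, applied to v:
   r^{-2} sum_j (x_j dy_j - y_j dx_j) *)
Definition theta (q v : E) : R := ImH v q / r2 q.

Fixpoint Ck (k : nat) (f : E -> E) (U : set E) : Prop :=
  match k with
  | 0 => {within U, continuous f}
  | k'.+1 => (forall x, U x -> differentiable f x) /\
             (forall v : E, Ck k' (fun x => derive f x v) U)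
  end.

Definition C1 (f : E -> E) (U : set E) : Prop := Ck 1 f U.
Definition Cinf (f : E -> E) (U : set E) : Prop := forall k, Ck k f U.

(* model: R^m x {0} (bd = false), or the half space
   {v_{m-1} >= 0} in R^m x {0} (bd = true) *)
Definition model_set (m : nat) (bd : bool) : set E :=
  [set v | (forall i : 'I_(n.+1 + n.+1), (m <= i)%N -> v ord0 i = 0) /\
           (bd -> forall i : 'I_(n.+1 + n.+1), i.+1 = m -> 0 <= v ord0 i)].

Definition chart (reg : (E -> E) -> set E -> Prop) (m : nat) (bd : bool)
    (S : set E) (q : E) (U : set E) (phi : E -> E) : Prop :=
  [/\ open U, U q, reg phi U, open (phi @` U) &
      [/\ (exists psi : E -> E, reg psi (phi @` U) /\
             forall x, U x -> psi (phi x) = x),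
          (forall x y, U x -> U y -> phi x = phi y -> x = y) &
          phi @` (U `&` S) = phi @` U `&` model_set m bd]].

Definition submanifold (reg : (E -> E) -> set E -> Prop) (m : nat) (bd : bool)
    (S : set E) : Prop :=
  forall q, S q -> exists U phi, chart reg m bd S q U phi.

Definition tangent (m : nat) (bd : bool) (S : set E) (q : E) : set E :=
  [set v | exists U phi, chart C1 m bd S q U phi /\
     forall i : 'I_(n.+1 + n.+1), (m <= i)%N -> derive phi q v ord0 i = 0].

Definition bd_point (m : nat) (S : set E) (q : E) : Prop :=
  S q /\ exists U phi, chart C1 m true S q U phi /\
     forall i : 'I_(n.+1 + n.+1), i.+1 = m -> phi q ord0 i = 0.

Definition bd_tangent (m : nat) (S : set E) (q : E) : set E :=
  [set v | exists U phi, chart C1 m true S q U phi /\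
     (forall i : 'I_(n.+1 + n.+1), i.+1 = m -> phi q ord0 i = 0) /\
     forall i : 'I_(n.+1 + n.+1), (m <= i.+1)%N -> derive phi q v ord0 i = 0].

(* Sigma (in the Bergman ball model, Upsilon_p = id for p = 0) is
   C^1-asymptotically regular: its closure is a C^1 submanifold with boundary,
   whose boundary is exactly its intersection with the sphere, meeting the
   sphere transversally *)
Definition asymp_regular_C1 (m : nat) (Sigma : set E) : Prop :=
  let S0 := closure Sigma in
  [/\ submanifold C1 m true S0,
      (forall q, S0 q -> (bd_point m S0 q <-> unit_sphere q)) &
      (forall q, S0 q -> unit_sphere q ->
         exists2 v, tangent m true S0 q v & ReH v q != 0)].

Definition horizontal_boundary (m : nat) (S0 : set E) : Prop :=
  forall q, bd_point m S0 q -> forall v, bd_tangent m S0 q v -> theta q v = 0.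

Definition asymp_horizontal (m : nat) (Sigma : set E) : Prop :=
  asymp_regular_C1 m Sigma /\ horizontal_boundary m (closure Sigma).

Definition isotropic (m : nat) (Sigma : set E) : Prop :=
  forall z, Sigma z -> forall X Y, tangent m false Sigma z X ->
    tangent m false Sigma z Y -> kahler z X Y = 0.

End Defs.

From HB Require Import structures.
From mathcomp Require Import all_boot all_order all_algebra.
From mathcomp Require Import all_classical all_reals all_analysis.
From mathcomp Require Import ring.
Set Implicit Arguments. Unset Strict Implicit. Unset Printing Implicit Defensive.
Import Order.TTheory GRing.Theory Num.Theory.
Import numFieldNormedType.Exports.
Local Open Scope classical_set_scope.
Local Open Scope ring_scope.

(* A tangent vector [X] of the boundary at [q] is tangent to the sphere, so
   [Re <X, q> = 0], and [theta_q(X) = Im <X, q>] is what remains.  Through a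
   boundary chart, [X] and a transversal vector [v] of the closure are carried
   to tangent vectors of [Sigma] at nearby interior points, where the Kahler
   form vanishes by isotropy.  Multiplied by [(1 - |z|^2)^2] the Kahler form is
   continuous up to the sphere, with value
   [Re <X, q> Im <q, v> + Im <X, q> Re <q, v>] at [q]; hence
   [Im <X, q> Re <q, v> = 0], and transversality [Re <q, v> <> 0] concludes.
   Carrying vectors along charts works because the differential of a
   transition between half-space charts preserves [R^m]: it maps inward
   vectors into the closed subspace [R^m], and these span [R^m]. *)

Section Calculus.
Variables (R : realType) (U V W : normedModType R).

Lemma cvg_line (w p : V) : h *: w + p @[h --> (0 : R)] --> p.
Proof.
rewrite -[X in _ --> X]add0r; apply: cvgD; last exact: cvg_cst.
by rewrite -(scale0r w); apply: cvgZr_tmp; exact: cvg_id.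
Qed.

Lemma derive_compE (f : U -> V) (g : V -> W) x v :
  differentiable f x -> differentiable g (f x) ->
  'D_v (g \o f) x = 'D_('D_v f x) g (f x).
Proof.
move=> df dg.
rewrite (deriveE _ (differentiable_comp df dg)) (diff_comp df dg).
by rewrite (deriveE _ dg) (deriveE _ df).
Qed.

Lemma closed_derive_at_right (f : V -> W) a v (C : set W) :
  closed C -> derivable f a v ->
  (\forall h \near (0 : R)^'+, C (h^-1 *: (f (h *: v + a) - f a))) ->
  C ('D_v f a).
Proof.
by move=> cC df nearC; exact: closed_cvg cC nearC _ (cvg_dnbhs_at_right df).
Qed.

End Calculus.

Lemma closure_near_closed (T U : topologicalType) (H : T -> U) (C : set U)
    (S : set T) q :
  closed C -> {for q, continuous H} -> closure S q ->
  (\forall z \near q, S z -> C (H z)) -> C (H q).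
Proof.
move=> cC Hq Sq nearC; rewrite (closure_id C).1 // => B nB.
have /= nB' : nbhs q (H @^-1` B) by exact: Hq.
have [z [Sz [Bz Cz]]] := Sq _ (filterI nB' nearC).
by exists (H z); split => //; exact: Cz.
Qed.

Section Hermitian.
Variables (R : realType) (n : nat).
Local Notation V := (E R n).
Implicit Types (a b z X Y : V) (k : R).

Lemma ReHC a b : ReH a b = ReH b a.
Proof. by apply: eq_bigr => j _; ring. Qed.

Lemma ReH_Jst a b : ReH a (Jst b) = ImH a b.
Proof.
rewrite /ReH /ImH /Jst /xc /yc row_mxKl row_mxKr.
by apply: eq_bigr => j _; rewrite !mxE; ring.
Qed.

Lemma ImH_Jst a b : ImH a (Jst b) = - ReH a b.
Proof.
rewrite /ReH /ImH /Jst /xc /yc row_mxKl row_mxKr -sumrN.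
by apply: eq_bigr => j _; rewrite !mxE; ring.
Qed.

Lemma ReH_double a b : ReH a (b + b) = 2 * ReH a b.
Proof. by rewrite /ReH /xc /yc mulr_sumr; apply: eq_bigr => j _; rewrite !mxE; ring. Qed.

Lemma ReH_diff_sum k a b : ReH (k *: (a - b)) (a + b) = k * (r2 a - r2 b).
Proof.
rewrite /r2 /ReH /xc /yc -sumrB mulr_sumr.
by apply: eq_bigr => j _; rewrite !mxE; ring.
Qed.

Definition kahler_num z X Y :=
  (1 - r2 z) * ImH X Y + (ReH X z * ImH z Y + ImH X z * ReH z Y).

Lemma kahlerE z X Y : r2 z != 1 ->
  kahler z X Y = kahler_num z X Y / (1 - r2 z) ^+ 2.
Proof.
move=> z_sphere; have d0 : 1 - r2 z != 0 by rewrite subr_eq0 eq_sym.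
by rewrite /kahler /gB !ReH_Jst !ImH_Jst /kahler_num; field.
Qed.

Lemma kahler_num_sphere z X Y : r2 z = 1 ->
  kahler_num z X Y = ReH X z * ImH z Y + ImH X z * ReH z Y.
Proof. by move=> z1; rewrite /kahler_num z1 subrr mul0r add0r. Qed.

Section Convergence.
Context {T : Type} (F : set_system T) {FF : Filter F}.
Variables (f g : T -> V) (a b : V).
Hypotheses (fa : f t @[t --> F] --> a) (gb : g t @[t --> F] --> b).

Let cvg_coord (u : T -> V) (l : V) i :
  u t @[t --> F] --> l -> u t ord0 i @[t --> F] --> l ord0 i.
Proof. by move=> ul; apply: (continuous_cvg _ (@coord_continuous R 1 _ ord0 i l)). Qed.

Lemma cvg_ReH : ReH (f t) (g t) @[t --> F] --> ReH a b.
Proof.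
rewrite /ReH /xc /yc; under eq_cvg do rewrite /ReH /xc /yc.
apply: cvg_big => [|j _]; first exact: add_continuous.
rewrite !mxE; under eq_cvg do rewrite !mxE.
by apply: cvgD; apply: cvgM; exact: cvg_coord.
Qed.

Lemma cvg_ImH : ImH (f t) (g t) @[t --> F] --> ImH a b.
Proof.
rewrite /ImH /xc /yc; under eq_cvg do rewrite /ImH /xc /yc.
apply: cvg_big => [|j _]; first exact: add_continuous.
rewrite !mxE; under eq_cvg do rewrite !mxE.
by apply: cvgB; apply: cvgM; exact: cvg_coord.
Qed.

End Convergence.

Lemma cvg_kahler_num {T : Type} (F : set_system T) {FF : Filter F}
    (f g h : T -> V) (a b c : V) :
  f t @[t --> F] --> a -> g t @[t --> F] --> b -> h t @[t --> F] --> c ->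
  kahler_num (f t) (g t) (h t) @[t --> F] --> kahler_num a b c.
Proof.
move=> fa gb hc; apply: cvgD.
  by apply: cvgM; [apply: cvgB; [exact: cvg_cst | exact: cvg_ReH] | exact: cvg_ImH].
by apply: cvgD; apply: cvgM;
  [exact: cvg_ReH | exact: cvg_ImH | exact: cvg_ImH | exact: cvg_ReH].
Qed.

End Hermitian.

Section ModelSpace.
Variables (R : realType) (n : nat).
Local Notation V := (E R n).

Definition model_space (m : nat) : set V :=
  [set v | forall i : 'I_(n.+1 + n.+1), (m <= i)%N -> v ord0 i = 0].

Lemma closed_model_space m : closed (model_space m).
Proof.
have -> : model_space m = \bigcap_(i in [set i : 'I_(n.+1 + n.+1) | (m <= i)%N])
    ((fun v : V => v ord0 i) @^-1` [set 0]).
  by apply/seteqP; split => v /= vm i; exact: vm.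
apply: closed_bigI => i _; apply: preimage_closed; last exact: closed_eq.
by move=> x _; exact: coord_continuous.
Qed.

Lemma model_space_comb m k l (a b : V) :
  model_space m a -> model_space m b -> model_space m (k *: a + l *: b).
Proof. by move=> ma mb i mi; rewrite !mxE ma // mb // !mulr0 addr0. Qed.

Lemma model_set_space m bd : model_set m bd `<=` model_space m.
Proof. by move=> v []. Qed.

Section HalfSpace.
Variables (m : nat) (T : V -> V) (p : V).
Hypotheses (dT : differentiable T p) (Mp : model_set m true p)
  (T_model : \forall y \near p, model_set m true y -> model_space m (T y)).

Lemma derive_halfspace_inward u : model_space m u ->
  (forall i : 'I_(n.+1 + n.+1), i.+1 = m -> 0 <= u ord0 i) ->
  model_space m ('D_u T p).
Proof.
move=> mu u_in; apply: (closed_derive_at_right (@closed_model_space m)).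
  exact: diff_derivable.
have [Mp0 Mp1] := Mp.
have : \forall h \near (0 : R),
    model_set m true (h *: u + p) -> model_space m (T (h *: u + p)).
  exact: cvg_line T_model.
rewrite near_withinE; apply: filterS => h Th h_gt0.
rewrite scalerBr -scaleNr; apply: model_space_comb => //; last first.
  exact: (nbhs_singleton T_model Mp).
apply: Th; split => [i mi|_ i mi]; rewrite !mxE.
  by rewrite mu // Mp0 // mulr0 addr0.
by rewrite addr_ge0 ?Mp1 // mulr_ge0 ?u_in // ltW.
Qed.

(* [w] is the difference of the inward vectors [w + c e] and [c e], where [e]
   is the inward unit normal of the boundary and [c] bounds [|w_i|]. *)
Lemma derive_halfspace w : model_space m w -> model_space m ('D_w T p).
Proof.
move=> mw.
pose e : V := \row_j ((j.+1 == m)%:R).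
pose c := \sum_j `|w ord0 j|.
have me : model_space m e.
  by move=> i mi; rewrite mxE; case: eqP => // ei; move: mi; rewrite -ei ltnn.
have e_in (i : 'I_(n.+1 + n.+1)) : i.+1 = m -> 0 <= e ord0 i.
  by move=> im; rewrite mxE im eqxx.
have c_ge (i : 'I_(n.+1 + n.+1)) : `|w ord0 i| <= c.
  by rewrite /c (bigD1 i) //= lerDl sumr_ge0.
have -> : w = 1 *: (1 *: w + c *: e) + (- c) *: e by rewrite !scale1r scaleNr addrK.
rewrite deriveE // linearD !linearZ /= -!deriveE //.
apply: model_space_comb; last exact: derive_halfspace_inward.
apply: derive_halfspace_inward; first exact: model_space_comb.
move=> i im; rewrite !mxE im eqxx mulr1 mul1r -lerBlDr sub0r.
by have := c_ge i; rewrite ler_norml => /andP[].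
Qed.

End HalfSpace.
End ModelSpace.

Section Charts.
Variables (R : realType) (n : nat).
Local Notation V := (E R n).

Lemma chart_at reg m bd (S : set V) q U phi x :
  chart reg m bd S q U phi -> U x -> chart reg m bd S x U phi.
Proof. by case=> oU _ Cphi oimg H Ux; split. Qed.

Lemma submanifold_Cinf_C1 m bd (S : set V) :
  submanifold (@Cinf R n) m bd S -> submanifold (@C1 R n) m bd S.
Proof.
move=> subS q Sq.
have [U [phi [oU Uq Cphi oimg [[psi [Cpsi phiK]] inj img]]]] := subS q Sq.
exists U, phi; split => //; first exact: Cphi 1%N.
by split => //; exists psi; split => //; exact: Cpsi 1%N.
Qed.

Section C1Chart.
Variables (m : nat) (bd : bool) (S : set V) (q : V) (U : set V) (phi : V -> V).
Hypothesis ch : chart (@C1 R n) m bd S q U phi.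

Lemma nbhs_chart_domain x : U x -> nbhs x U.
Proof. by have [oU _ _ _ _] := ch; move=> Ux; apply: open_nbhs_nbhs. Qed.

Lemma nbhs_chart_image x : U x -> nbhs (phi x) (phi @` U).
Proof.
by have [_ _ _ oimg _] := ch; move=> Ux; apply: open_nbhs_nbhs; split => //; exists x.
Qed.

Lemma differentiable_chart x : U x -> differentiable phi x.
Proof. by have [_ _ [dphi _] _ _] := ch; exact: dphi. Qed.

Lemma chart_memP x : U x -> S x <-> model_set m bd (phi x).
Proof.
have [_ _ _ _ [_ inj img]] := ch; move=> Ux; split => [Sx|Mx].
  have : (phi @` (U `&` S)) (phi x) by exists x.
  by rewrite img => -[].
have : (phi @` U `&` model_set m bd) (phi x) by split => //; exists x.
by rewrite -img => -[y [Uy Sy] /inj] <-.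
Qed.

Lemma chart_closure_model x : U x -> closure S x -> model_space m (phi x).
Proof.
move=> Ux Sx; apply: (closure_near_closed (@closed_model_space R n m) _ Sx).
  exact: differentiable_continuous (differentiable_chart Ux).
apply: filterS (nbhs_chart_domain Ux) => y Uy /(chart_memP Uy).
exact: model_set_space.
Qed.

Variable psi : V -> V.
Hypotheses (Cpsi : C1 psi (phi @` U)) (phiK : forall x, U x -> psi (phi x) = x).

Lemma differentiable_chart_inv x : U x -> differentiable psi (phi x).
Proof. by have [dpsi _] := Cpsi; move=> Ux; apply: dpsi; exists x. Qed.

Lemma chart_inv_cvg x : U x -> psi y @[y --> phi x] --> x.
Proof.
move=> Ux; rewrite -{2}(phiK Ux).
exact: differentiable_continuous (differentiable_chart_inv Ux).
Qed.

Lemma cvg_derive_chart_inv v x :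
  U x -> 'D_v psi y @[y --> phi x] --> 'D_v psi (phi x).
Proof.
have [_ Cdpsi] := Cpsi; have [_ _ _ oimg _] := ch.
move=> Ux; have := Cdpsi v; rewrite continuous_open_subspace //.
by apply; apply: mem_set; exists x.
Qed.

Lemma derive_chart_invK x v : U x -> 'D_('D_v phi x) psi (phi x) = v.
Proof.
move=> Ux; rewrite -derive_compE; last 2 first.
- exact: differentiable_chart.
- exact: differentiable_chart_inv.
rewrite -[RHS](derive_id x v); apply: near_eq_derive.
by apply: filterS (nbhs_chart_domain Ux) => y Uy; rewrite /= phiK.
Qed.

End C1Chart.
End Charts.

Section Tangents.
Variables (R : realType) (n : nat).
Local Notation V := (E R n).
Variable m : nat.

Lemma derive_transition_model (S1 S2 : set V) q1 q2 U1 U2 phi1 phi2 psi1 bd x w :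
  chart (@C1 R n) m true S1 q1 U1 phi1 -> C1 psi1 (phi1 @` U1) ->
  (forall y, U1 y -> psi1 (phi1 y) = y) ->
  chart (@C1 R n) m bd S2 q2 U2 phi2 ->
  (forall y, U1 y -> U2 y -> S1 y -> model_space m (phi2 y)) ->
  U1 x -> U2 x -> S1 x -> model_space m w ->
  model_space m ('D_w (phi2 \o psi1) (phi1 x)).
Proof.
move=> ch1 Cpsi1 phiK1 ch2 S1_model U1x U2x S1x mw.
have dpsi1 := differentiable_chart_inv Cpsi1 U1x.
have dphi2 : differentiable phi2 (psi1 (phi1 x)).
  by rewrite phiK1 //; exact: (differentiable_chart ch2 U2x).
apply: derive_halfspace mw; first exact: differentiable_comp dpsi1 dphi2.
  exact: (chart_memP ch1 U1x).1.
have /= U2_near : \forall y \near phi1 x, U2 (psi1 y).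
  exact: (chart_inv_cvg Cpsi1 phiK1 U1x (nbhs_chart_domain ch2 U2x)).
apply: filterS (filterI (nbhs_chart_image ch1 U1x) U2_near) => _ [[y U1y <-] U2y] My.
rewrite /= phiK1 // in U2y *.
exact: S1_model U1y U2y ((chart_memP ch1 U1y).2 My).
Qed.

Lemma tangent_derive_chart (S : set V) q U phi v :
  chart (@C1 R n) m true S q U phi -> S q -> tangent m true S q v ->
  model_space m ('D_v phi q).
Proof.
move=> ch Sq [U2 [phi2 [ch2 mv]]].
have [_ Uq _ _ _] := ch; have [_ U2q _ _ [[psi2 [Cpsi2 phiK2]] _ _]] := ch2.
rewrite -(derive_chart_invK ch2 Cpsi2 phiK2 v U2q) -{1}(phiK2 _ U2q).
rewrite -derive_compE; last 2 first.
- exact: (differentiable_chart_inv Cpsi2 U2q).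
- by rewrite phiK2 //; exact: (differentiable_chart ch Uq).
apply: (derive_transition_model ch2 Cpsi2 phiK2 ch _ U2q Uq Sq mv) => y _ Uy Sy.
exact/model_set_space/(chart_memP ch Uy).
Qed.

Lemma tangent_derive_chart_inv (S : set V) q U phi psi z w :
  submanifold (@C1 R n) m false S -> chart (@C1 R n) m true (closure S) q U phi ->
  C1 psi (phi @` U) -> (forall x, U x -> psi (phi x) = x) ->
  S z -> U z -> model_space m w -> tangent m false S z ('D_w psi (phi z)).
Proof.
move=> subS ch Cpsi phiK Sz Uz mw; have [U' [phi' ch']] := subS z Sz.
have [_ U'z _ _ _] := ch'; exists U', phi'; split => //.
have dpsi := differentiable_chart_inv Cpsi Uz.
have dphi' : differentiable phi' (psi (phi z)).
  by rewrite phiK //; exact: (differentiable_chart ch' U'z).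
rewrite /= -[X in 'D_ _ phi' X](phiK _ Uz) -derive_compE //.
apply: (derive_transition_model ch Cpsi phiK ch' _ Uz U'z (subset_closure Sz) mw).
by move=> y _ U'y; exact: (chart_closure_model ch' U'y).
Qed.

End Tangents.

Section Sphere.
Variables (R : realType) (n : nat).
Local Notation V := (E R n).

Lemma r2_const_derive_orthogonal (g : V -> V) p w : differentiable g p ->
  (\forall h \near (0 : R), r2 (g (h *: w + p)) = r2 (g p)) ->
  ReH ('D_w g p) (g p) = 0.
Proof.
move=> dg r2_const.
have quot_cvg : h^-1 *: (g (h *: w + p) - g p) @[h --> (0 : R)^'] --> 'D_w g p.
  exact: diff_derivable.
have sum_cvg : g (h *: w + p) + g p @[h --> (0 : R)^'] --> g p + g p.
  apply: cvgD; last exact: cvg_cst.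
  apply: cvg_within_filter.
  exact: (cvg_comp _ _ (@cvg_line _ _ w p) (differentiable_continuous dg)).
have : ReH ('D_w g p) (g p + g p) = 0.
  have RQS := cvg_ReH (FF := dnbhs_filter _) quot_cvg sum_cvg.
  apply: (closed_cvg _ (@closed_eq R 0) _ _ RQS).
  rewrite near_withinE; apply: filterS r2_const => h r2_h _.
  by rewrite ReH_diff_sum r2_h subrr mulr0.
by rewrite ReH_double => /eqP; rewrite mulf_eq0 pnatr_eq0 => /eqP.
Qed.

Lemma bd_tangent_orthogonal m (S : set V) q X :
  (forall x, bd_point m S x -> unit_sphere x) ->
  bd_point m S q -> bd_tangent m S q X -> ReH X q = 0.
Proof.
move=> bd_sphere bdq [U [phi [ch [phiq mX]]]].
have [_ Uq _ _ [[psi [Cpsi phiK]] _ _]] := ch.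
have [Mq _] := (chart_memP ch Uq).1 bdq.1.
rewrite -(derive_chart_invK ch Cpsi phiK X Uq) -{3}(phiK _ Uq).
apply: r2_const_derive_orthogonal; first exact: (differentiable_chart_inv Cpsi Uq).
have near_img : \forall h \near (0 : R), (phi @` U) (h *: 'D_X phi q + phi q).
  exact: cvg_line (nbhs_chart_image ch Uq).
apply: filterS near_img => h [x Ux ex].
have phix_bd (i : 'I_(n.+1 + n.+1)) : i.+1 = m -> phi x ord0 i = 0.
  by move=> im; rewrite ex !mxE mX ?im // phiq // mulr0 addr0.
have Sx : S x.
  apply/(chart_memP ch Ux); split => [i mi|_ i /phix_bd -> //].
  by rewrite ex !mxE mX ?Mq ?mulr0 ?addr0 // leqW.
have bdx : bd_point m S x.
  split; first exact: Sx.
  by exists U, phi; split; [exact: (chart_at ch Ux) | exact: phix_bd].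
by rewrite -ex !phiK // (bd_sphere _ bdx) (bd_sphere _ bdq).
Qed.

End Sphere.

Lemma closure_isotropic_kahler_num (R : realType) (n m : nat) (S : set (E R n))
    q U phi X Y :
  S `<=` open_unit_ball (n:=n) -> submanifold (@C1 R n) m false S -> isotropic m S ->
  chart (@C1 R n) m true (closure S) q U phi -> closure S q ->
  model_space m ('D_X phi q) -> model_space m ('D_Y phi q) -> kahler_num q X Y = 0.
Proof.
move=> S_ball subS isoS ch Sq mX mY.
have [_ Uq _ _ [[psi [Cpsi phiK]] _ _]] := ch.
pose K y := kahler_num (psi y) ('D_('D_X phi q) psi y) ('D_('D_Y phi q) psi y).
have <- : K (phi q) = kahler_num q X Y by rewrite /K phiK // !(derive_chart_invK ch).
apply: (closure_near_closed (H := K \o phi) (@closed_eq R 0) _ Sq).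
  apply: continuous_comp.
    exact: differentiable_continuous (differentiable_chart ch Uq).
  apply: (cvg_kahler_num (FF := nbhs_filter _)).
  - exact: differentiable_continuous (differentiable_chart_inv Cpsi Uq).
  - exact: (cvg_derive_chart_inv ch Cpsi).
  - exact: (cvg_derive_chart_inv ch Cpsi).
apply: filterS (nbhs_chart_domain ch Uq) => z Uz Sz.
have := isoS z Sz _ _ (tangent_derive_chart_inv subS ch Cpsi phiK Sz Uz mX)
  (tangent_derive_chart_inv subS ch Cpsi phiK Sz Uz mY).
have z_sphere : r2 z != 1 by rewrite lt_eqF //; exact: S_ball.
rewrite kahlerE // => /eqP.
rewrite mulf_eq0 invr_eq0 expf_eq0 subr_eq0 [1 == _]eq_sym (negbTE z_sphere) andbF orbF.
by move=> /eqP K0; rewrite /= /K phiK.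
Qed.

Unset Implicit Arguments.

Theorem lemma3p2 (R : realType) (n m : nat) (Sigma : set (E R n)) :
  Sigma `<=` open_unit_ball (n:=n) ->
  (m <= n.+1 + n.+1)%N ->
  submanifold (@Cinf R n) m false Sigma ->
  asymp_regular_C1 m Sigma ->
  (2 <= m)%N ->
  isotropic m Sigma ->
  asymp_horizontal m Sigma.
Proof.
move=> Sigma_ball _ subSigma reg _ isoSigma; split => //.
have [_ bd_sphere transversal] := reg.
move=> q bdq X TX; have S0q : closure Sigma q by case: bdq.
have q_sphere : r2 q = 1 by exact: (bd_sphere q S0q).1.
have ReH_Xq : ReH X q = 0.
  by apply: (bd_tangent_orthogonal _ bdq TX) => x bdx; exact: (bd_sphere x bdx.1).1.
have [v Tv ReH_vq] := transversal q S0q q_sphere.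
have [U [phi [ch [_ mX]]]] := TX.
have : kahler_num q X v = 0.
  apply: (closure_isotropic_kahler_num Sigma_ball (submanifold_Cinf_C1 subSigma)
    isoSigma ch S0q).
    by move=> i mi; apply: mX; exact: leqW.
  exact: (tangent_derive_chart ch S0q Tv).
rewrite kahler_num_sphere // ReH_Xq mul0r add0r ReHC => /eqP.
by rewrite mulf_eq0 (negbTE ReH_vq) orbF /theta q_sphere divr1 => /eqP.
Qed.
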